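(* Let $r\ge1$ and $n\ge1$ be integers and let $\mathcal P(n,r,-1)$ be the set of lattice paths with steps $(1,1)$ (up) and $(1,-r)$ (down) from $(0,0)$ to $((r+1)n-1,-1)$ (so with $rn-1$ up steps and $n$ down steps). Then (whenever the denominators are nonzero): (1) For each $k=1,2,\dots,rn-1$, the number of paths in $\mathcal P(n,r,-1)$ that start with an up step and have exactly $k$ up steps starting on or above the $x$-axis is $\frac{1}{rn-1}\binom{(r+1)n-2}{n}$. (2) For each $k=1,2,\dots,n$, the number of paths in $\mathcal P(n,r,-1)$ that start with a down step and have exactly $k$ down steps starting on or above the $x$-axis is $\frac1n\binom{(r+1)n-2}{n-1}$. (3) For each $k=1,2,\dots,(r+1)n-1$, the number of paths in $\mathcal P(n,r,-1)$ with exactly $k$ vertices on or above the $x$-axis is $\frac{1}{(r+1)n-1}\binom{(r+1)n-1}{n}$.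
   Context: A step starts on or above the $x$-axis if its initial vertex has $y$-coordinate $\ge0$; a vertex is on or above the $x$-axis if its $y$-coordinate is $\ge0$ (the final vertex, at height $-1$, is never counted). *)

From HB Require Import structures.
From mathcomp Require Import all_boot all_order all_algebra.
Set Implicit Arguments. Unset Strict Implicit. Unset Printing Implicit Defensive.
Import Order.TTheory GRing.Theory Num.Theory.
Local Open Scope ring_scope.

(* A path is a sequence of steps: true = up step (1,1), false = down step (1,-r). *)
Definition step (r : nat) (b : bool) : int := if b then 1 else - (r%:Z).

Definition height (r : nat) (s : seq bool) (i : nat) : int :=
  \sum_(b <- take i s) step r b.

(* The paths of P(n,r,-1): length (r+1)n-1 with exactly n down steps
   (hence rn-1 up steps, ending at height -1). *)
Definition is_path (r n : nat) (s : seq bool) : bool :=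
  (size s == ((r.+1 * n).-1)%N) && (count negb s == n).

Definition ups_above (r : nat) (s : seq bool) : nat :=
  count (fun j => nth false s j && (0 <= height r s j)) (iota 0 (size s)).

Definition downs_above (r : nat) (s : seq bool) : nat :=
  count (fun j => ~~ nth false s j && (0 <= height r s j)) (iota 0 (size s)).

(* number of vertices on or above the x-axis (final vertex excluded) *)
Definition verts_above (r : nat) (s : seq bool) : nat :=
  count (fun j => 0 <= height r s j) (iota 0 (size s)).

From HB Require Import structures.
From mathcomp Require Import all_boot all_order all_algebra.
From mathcomp Require Import zify.
Set Implicit Arguments. Unset Strict Implicit. Unset Printing Implicit Defensive.
Import Order.TTheory GRing.Theory Num.Theory.

(* Rotating a path at step i makes vertex i the new origin.  Since the path
   ends at height -1, an original vertex a lies on or above the axis after the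
   rotation iff (h a, a) >= (h i, i) lexicographically.  So, among the
   rotations that start with a step of a given kind, the number of such steps
   starting on or above the axis is the rank of the starting step in a total
   order: every value 1, ..., #steps of that kind is taken by exactly one
   rotation (cycle lemma).  Double counting pairs (path, rotation) gives
   ((r+1)n-1) * #{paths with value k} = #P(n,r,-1) = C((r+1)n-1, n), and the
   three formulas are rewritings of this by binomial identities. *)

Lemma count_gt_ge_mem d (T : orderType d) (x : T) s :
  (count (> x)%O s < count (>= x)%O s)%N = (x \in s).
Proof. exact: (@count_lt_le_mem _ T^d). Qed.

Lemma count_rank_eq1 d (T : orderType d) (L : seq T) k :
  uniq L -> (0 < k <= size L)%N -> count (fun x => count (>= x)%O L == k) L = 1%N.
Proof.
move=> uniqL k_range; set rank := fun x => count (>= x)%O L.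
have rank_lt x y : x \in L -> (x < y)%O -> (rank y < rank x)%N.
  move=> xL xy; apply: leq_trans (_ : count (> x)%O L < rank x)%N; last first.
    by rewrite count_gt_ge_mem.
  by rewrite ltnS; apply: sub_count => z /= /(lt_le_trans xy).
have rank_inj : {in L &, injective rank}.
  move=> x y xL yL; case: (ltgtP x y) => // [xy|yx] eq_rank.
  - by have := rank_lt _ _ xL xy; rewrite eq_rank ltnn.
  - by have := rank_lt _ _ yL yx; rewrite eq_rank ltnn.
have rank_range : {subset map rank L <= iota 1 (size L)}.
  move=> _ /mapP[x xL ->]; rewrite mem_iota add1n ltnS count_size andbT.
  by rewrite -has_count; apply/hasP; exists x => /=.
have uniq_ranks : uniq (map rank L) by rewrite map_inj_in_uniq.
have [|_ rank_onto] := uniq_min_size uniq_ranks rank_range.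
  by rewrite size_iota size_map.
rewrite -[LHS]/(count (preim rank (pred1 k)) L) -count_map count_uniq_mem //.
by rewrite rank_onto mem_iota add1n ltnS k_range.
Qed.

Lemma count_nth_iota (T : Type) (x0 : T) (P : pred T) s :
  count (fun i => P (nth x0 s i)) (iota 0 (size s)) = count P s.
Proof. by rewrite -[in RHS](mkseq_nth x0 s) /mkseq count_map. Qed.

Lemma sum_bool_card (T : finType) (C : pred T) :
  (\sum_(t : T) (C t : nat))%N = #|[set t | C t]|.
Proof. by rewrite -sum1_card [RHS]big_mkcond; apply: eq_bigr => t _; rewrite inE. Qed.

Lemma sum_ord_count m (b : pred nat) : (\sum_(i < m) (b i : nat))%N = count b (iota 0 m).
Proof.
rewrite -sum1_count [RHS]big_mkcond -(big_mkord xpredT (fun i => b i : nat)).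
by rewrite /index_iota subn0.
Qed.

Lemma card_rot_transversal (T : finType) N (A B : pred (seq T)) :
  (forall i s, A (rot i s) = A s) ->
  (forall t : N.-tuple T, A t -> count (fun i => B (rot i t)) (iota 0 N) = 1%N) ->
  (N * #|[set t : N.-tuple T | A t && B t]|)%N = #|[set t : N.-tuple T | A t]|.
Proof.
move=> rotA rot_unique.
have card_rot i : #|[set t : N.-tuple T | A t && B t]| =
    #|[set t : N.-tuple T | A t && B (rot i t)]|.
  rewrite -(card_preimset _ (f := fun t : N.-tuple T => rot_tuple i t)); last first.
    by move=> t1 t2 /(congr1 val)/rot_inj/val_inj.
  by apply: eq_card => t; rewrite !inE rotA.
rewrite -[N in (N * _)%N]card_ord -sum_nat_const.
under eq_bigr => i _ do rewrite (card_rot i).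
rewrite -sum_bool_card; under eq_bigr do rewrite -sum_bool_card.
rewrite exchange_big /=; apply: eq_bigr => t _.
rewrite (eq_bigl xpredT) // (sum_ord_count _ (fun i => A t && B (rot i t))).
by case At: (A t); [exact: rot_unique | rewrite count_pred0].
Qed.

Lemma card_tuples_count_negb N n :
  #|[set t : N.-tuple bool | count negb t == n]| = 'C(N, n).
Proof.
pose downs (t : N.-tuple bool) := [set i | ~~ tnth t i].
pose of_set (A : {set 'I_N}) := [tuple ~~ (i \in A) | i < N].
have downsK : cancel of_set downs.
  by move=> A; apply/setP => i; rewrite inE tnth_mktuple negbK.
have downs_inj : injective downs.
  move=> t1 t2 /setP eq_downs; apply: eq_from_tnth => i.
  by move: (eq_downs i); rewrite !inE => /negb_inj.
have card_downs (t : N.-tuple bool) : count negb t = #|downs t|.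
  by rewrite -sum1_count big_tuple cardsE -sum1_card.
rewrite -(card_imset _ downs_inj) -[N in 'C(N, _)]card_ord -card_draws.
congr #|pred_of_set _|.
apply/setP => A; rewrite inE; apply/imsetP/idP => [[t] | /eqP card_A].
  by rewrite inE => /eqP <- ->; rewrite card_downs.
exists (of_set A); last by rewrite downsK.
by rewrite inE card_downs downsK card_A.
Qed.

Local Open Scope ring_scope.

(* [ups_above], [downs_above] and [verts_above] are [count_above r P] for
   [P = id], [negb] and [predT], up to conversion. *)
Definition count_above r (P : pred bool) (s : seq bool) : nat :=
  count (fun j => P (nth false s j) && (0 <= height r s j)) (iota 0 (size s)).

Lemma heightD r s i j : height r s (i + j) = height r s i + height r (drop i s) j.
Proof. by rewrite /height takeD big_cat. Qed.

Lemma height_size r s : height r s (size s) = (count id s)%:Z - (count negb s * r)%:Z.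
Proof.
rewrite /height take_size; elim: s => [|b s IH]; first by rewrite big_nil.
by rewrite big_cons IH /step; case: b => /=; lia.
Qed.

Lemma count_up_path r n s : is_path r n s -> count id s = (r * n - 1)%N.
Proof.
case/andP=> /eqP size_s /eqP downs; have := count_predC id s.
by rewrite size_s -[count (predC id) s]/(count negb s) downs mulSn; lia.
Qed.

Lemma height_path_end r n s : (0 < n)%N -> is_path r n s -> height r s (size s) = -1.
Proof.
move=> n_gt0 /andP[/eqP size_s /eqP downs]; have := count_predC id s.
rewrite height_size size_s -[count (predC id) s]/(count negb s) downs mulSn.
by lia.
Qed.

Lemma nth_rot_head (T : Type) (x0 : T) s i j : (j < size s - i)%N ->
  nth x0 (rot i s) j = nth x0 s (i + j).
Proof. by move=> hj; rewrite /rot nth_cat size_drop hj nth_drop. Qed.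

Lemma nth_rot_tail (T : Type) (x0 : T) s i j : (i <= size s)%N -> (j < i)%N ->
  nth x0 (rot i s) (size s - i + j) = nth x0 s j.
Proof.
by move=> hi hj; rewrite /rot nth_cat size_drop ltnNge leq_addr /= addKn nth_take.
Qed.

Lemma height_rot_head r s i j : (i <= size s)%N -> (j <= size s - i)%N ->
  height r (rot i s) j = height r s (i + j) - height r s i.
Proof.
by move=> hi hj; rewrite heightD addrC addKr /height /rot takel_cat // size_drop.
Qed.

Lemma height_rot_tail r s i j : (i <= size s)%N -> (j <= i)%N ->
  height r (rot i s) (size s - i + j) =
  height r s (size s) - height r s i + height r s j.
Proof.
move=> hi hj; rewrite -[in height r s (size s)](subnKC hi) [height r s (i + _)]heightD
  [_ + _ - height r s i]addrC addKr.
rewrite /height /rot takeD take_size_cat ?size_drop // drop_size_cat ?size_drop //.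
by rewrite take_takel // big_cat [take _ (drop _ _)]take_oversize ?size_drop.
Qed.

Definition vertex_key r s (j : nat) : int *l nat := (height r s j, j).

(* A vertex [a < i] lands at height [h a - h i - 1] after the rotation, the
   path ending at [-1]; a vertex [a >= i] lands at height [h a - h i]. *)
Lemma count_above_rot r P s i : height r s (size s) = -1 -> (i < size s)%N ->
  count_above r P (rot i s) =
  count (fun a => vertex_key r s i <= vertex_key r s a)%O
    [seq a <- iota 0 (size s) | P (nth false s a)].
Proof.
move=> end_s lt_i_s; have le_i_s := ltnW lt_i_s.
rewrite count_filter /count_above size_rot.
rewrite -{1}(subnK le_i_s) iotaD count_cat add0n.
rewrite -[in RHS](subnKC le_i_s) iotaD count_cat addnC add0n.
have iota_shift m n : iota m n = map (addn m) (iota 0 n) by rewrite -iotaDl addn0.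
rewrite [iota i _]iota_shift [iota (size s - i) _]iota_shift !count_map.
congr (_ + _)%N; apply: eq_in_count => j; rewrite mem_iota add0n => /andP[_ lt_j] /=.
- rewrite nth_rot_tail // height_rot_tail ?(ltnW lt_j) // end_s lexi_pair.
  by rewrite leEnat leqNgt lt_j implybF andbC; congr (_ && _); lia.
- rewrite nth_rot_head // height_rot_head ?(ltnW lt_j) // subr_ge0 lexi_pair.
  by rewrite leEnat leq_addr implybT andbT andbC.
Qed.

Lemma cycle_lemma r P s k : height r s (size s) = -1 -> (0 < k <= count P s)%N ->
  count (fun i => P (nth false s i) && (count_above r P (rot i s) == k))
    (iota 0 (size s)) = 1%N.
Proof.
move=> end_s k_range; set L := [seq a <- iota 0 (size s) | P (nth false s a)].
have -> : count (fun i => P (nth false s i) && (count_above r P (rot i s) == k))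
    (iota 0 (size s)) =
  count (fun x => count (>= x)%O (map (vertex_key r s) L) == k) (map (vertex_key r s) L).
  rewrite count_map count_filter; apply: eq_in_count => i.
  by rewrite mem_iota => /andP[_ lt_i] /=; rewrite count_above_rot // count_map andbC.
apply: count_rank_eq1; last by rewrite size_map size_filter count_nth_iota.
by rewrite map_inj_uniq ?filter_uniq ?iota_uniq // => a b [].
Qed.

Lemma is_path_rot r n i s : is_path r n (rot i s) = is_path r n s.
Proof. by rewrite /is_path size_rot (permP (_ : perm_eq (rot i s) s)) ?perm_rot. Qed.

Lemma card_paths r n :
  #|[set t : ((r.+1 * n).-1).-tuple bool | is_path r n t]| = 'C((r.+1 * n).-1, n).
Proof.
rewrite -card_tuples_count_negb; apply: eq_card => t.
by rewrite !inE /is_path size_tuple eqxx.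
Qed.

Lemma mul_card_count_above r n (P : pred bool) c k :
  (0 < n)%N -> (forall s, is_path r n s -> count P s = c) -> (0 < k <= c)%N ->
  ((r.+1 * n).-1 * #|[set t : ((r.+1 * n).-1).-tuple bool |
     is_path r n t && P (nth false t 0) && (count_above r P t == k)]|)%N =
  'C((r.+1 * n).-1, n).
Proof.
move=> n_gt0 count_P k_range; rewrite -card_paths.
set N := (r.+1 * n).-1.
set first_k := fun t => P (nth false t 0) && (count_above r P t == k).
rewrite (eq_card (B := [set t : N.-tuple bool | is_path r n t && first_k t])); last first.
  by move=> t; rewrite !inE andbA.
apply: card_rot_transversal => [i s | t path_t]; first exact: is_path_rot.
have end_t := height_path_end n_gt0 path_t.
rewrite -[in iota 0 _](size_tuple t) -(@cycle_lemma r P t k end_t) ?count_P //.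
apply: eq_in_count => i; rewrite mem_iota add0n => /andP[_ lt_i].
by rewrite /first_k nth_rot_head ?subn_gt0 ?addn0.
Qed.

Lemma card_up_first_ups_above r n k : (0 < n)%N -> (0 < k <= r * n - 1)%N ->
  ((r * n - 1) * #|[set t : ((r.+1 * n).-1).-tuple bool |
     is_path r n t && nth false t 0 && (ups_above r t == k)]|)%N =
  'C(r.+1 * n - 2, n).
Proof.
move=> n_gt0 k_range; have N_gt0 : (0 < (r.+1 * n).-1)%N by rewrite mulSn; lia.
apply/eqP; rewrite -(eqn_pmul2l N_gt0) mulnCA.
rewrite (mul_card_count_above (P := id) n_gt0 (@count_up_path r n)) //.
rewrite (_ : r.+1 * n - 2 = (r.+1 * n).-1.-1)%N ?mul_bin_down; last by lia.
by rewrite mulSn; apply/eqP; congr (_ * _)%N; lia.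
Qed.

Lemma card_down_first_downs_above r n k : (0 < r)%N -> (0 < k <= n)%N ->
  (n * #|[set t : ((r.+1 * n).-1).-tuple bool |
     is_path r n t && ~~ nth false t 0 && (downs_above r t == k)]|)%N =
  'C(r.+1 * n - 2, n.-1).
Proof.
move=> r_gt0 k_range; have n_gt0 : (0 < n)%N by lia.
have N_gt0 : (0 < (r.+1 * n).-1)%N by rewrite mulSn; lia.
have count_down s : is_path r n s -> count negb s = n by case/andP=> _ /eqP.
apply/eqP; rewrite -(eqn_pmul2l N_gt0) mulnCA.
rewrite (mul_card_count_above (P := negb) n_gt0 count_down) //.
rewrite (_ : r.+1 * n - 2 = (r.+1 * n).-1.-1)%N ?mul_bin_diag ?prednK //; lia.
Qed.

Lemma card_verts_above r n k : (0 < n)%N -> (0 < k <= (r.+1 * n).-1)%N ->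
  ((r.+1 * n).-1 * #|[set t : ((r.+1 * n).-1).-tuple bool |
     is_path r n t && (verts_above r t == k)]|)%N = 'C((r.+1 * n).-1, n).
Proof.
move=> n_gt0 k_range; have count_all s : is_path r n s -> count predT s = (r.+1 * n).-1.
  by case/andP=> /eqP size_s _; rewrite count_predT.
rewrite -(mul_card_count_above (P := predT) n_gt0 count_all k_range).
by congr (_ * _)%N; apply: eq_card => t; rewrite !inE andbT.
Qed.

Lemma natr_eq_invr_mul (R : numFieldType) (a b x : nat) :
  (0 < a)%N -> (a * x)%N = b -> x%:R = a%:R^-1 * b%:R :> R.
Proof. by move=> a_gt0 <-; rewrite natrM mulKf // pnatr_eq0 -lt0n. Qed.

Theorem theorem14 (r n : nat) (hr : (1 <= r)%N) (hn : (1 <= n)%N) :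
  (forall k : nat, (1 <= k <= r * n - 1)%N ->
     (#|[set t : ((r.+1 * n).-1).-tuple bool |
          is_path r n t && nth false t 0 && (ups_above r t == k)]|%:R : rat)
     = (r * n - 1)%:R^-1 * ('C((r.+1 * n - 2)%N, n))%:R) /\
  (forall k : nat, (1 <= k <= n)%N ->
     (#|[set t : ((r.+1 * n).-1).-tuple bool |
          is_path r n t && ~~ nth false t 0 && (downs_above r t == k)]|%:R : rat)
     = n%:R^-1 * ('C((r.+1 * n - 2)%N, n.-1))%:R) /\
  (forall k : nat, (1 <= k <= (r.+1 * n).-1)%N ->
     (#|[set t : ((r.+1 * n).-1).-tuple bool |
          is_path r n t && (verts_above r t == k)]|%:R : rat)
     = ((r.+1 * n).-1)%:R^-1 * ('C((r.+1 * n).-1, n))%:R).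
Proof.
split; [|split] => k k_range; apply: natr_eq_invr_mul.
- by lia.
- exact: card_up_first_ups_above.
- by lia.
- exact: card_down_first_downs_above.
- by rewrite mulSn; lia.
- exact: card_verts_above.
Qed.
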